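(* For every matroid $M$, the Borsuk number of $M$ equals the Borsuk number of its matroid polytope: $f(M)=f(P_M)$.
   Context: For a matroid $M$ on ground set $E$, $\mathcal{B}(M)$ denotes its set of bases, and the distance between two bases $B,B'$ is $|B\triangle B'|$; $\operatorname{diam}$ denotes diameter. The Borsuk number $f(M)$ is the minimum number of parts in a partition of $\mathcal{B}(M)$ in which every part has diameter strictly smaller than $\operatorname{diam}(\mathcal{B}(M))$; if $M$ has exactly one basis, $f(M):=+\infty$. For $S\subseteq E$, $\chi^S\in\{0,1\}^E$ is its indicator vector. The matroid polytope $P_M\subset\mathbb{R}^E$ is the convex hull of $\{\chi^B: B\in\mathcal{B}(M)\}$. For a bounded set $S$ in Euclidean space, $f(S)$ is the minimum number of parts in a partition of $S$ into parts of Euclidean diameter strictly smaller than that of $S$ ($+\infty$ if none exists). *)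

From HB Require Import structures.
From mathcomp Require Import all_boot all_order all_algebra.
From mathcomp Require Import boolp classical_sets reals.
Set Implicit Arguments. Unset Strict Implicit. Unset Printing Implicit Defensive.
Import Order.TTheory GRing.Theory Num.Theory.

Lemma ex_asbool_nat (P : nat -> Prop) :
  (exists k, P k) -> exists k, (fun k => `[< P k >]) k.
Proof. by move=> [k Pk]; exists k; apply/asboolP. Qed.

(* least k with P k, or None (= +oo) if there is no such k *)
Definition ext_min (P : nat -> Prop) : option nat :=
  match pselect (exists k, P k) with
  | left h => Some (ex_minn (ex_asbool_nat h))
  | right _ => None
  end.

Definition symdiff (E : finType) (A B : {set E}) : {set E} :=
  (A :\: B) :|: (B :\: A).

Definition is_matroid_bases (E : finType) (Bs : {set {set E}}) : Prop :=
  (exists B, B \in Bs) /\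
  forall B1 B2, B1 \in Bs -> B2 \in Bs -> forall x, x \in B1 :\: B2 ->
    exists2 y, y \in B2 :\: B1 & (y |: (B1 :\ x)) \in Bs.

Definition bdiam (E : finType) (F : {set {set E}}) : nat :=
  \max_(B in F) \max_(B' in F) #|symdiff B B'|.

(* partition of the bases into k parts (fibres of a labelling c; empty parts
   are harmless for the minimum) each of diameter < diam *)
Definition matroid_borsuk_feasible (E : finType) (Bs : {set {set E}}) (k : nat) : Prop :=
  exists c : {set E} -> 'I_k,
    forall i : 'I_k, (bdiam [set B in Bs | c B == i] < bdiam Bs)%N.

(* Borsuk number f(M); +oo (None) when no partition exists, e.g. one basis *)
Definition matroid_borsuk (E : finType) (Bs : {set {set E}}) : option nat :=
  ext_min (matroid_borsuk_feasible Bs).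

Local Open Scope ring_scope.
Local Open Scope classical_set_scope.

Definition edist (R : realType) (E : finType) (x y : E -> R) : R :=
  Num.sqrt (\sum_(e : E) (x e - y e) ^+ 2).

(* Euclidean diameter (supremum of distances; sup set0 = 0) *)
Definition ediam (R : realType) (E : finType) (S : set (E -> R)) : R :=
  sup [set d | exists x y, [/\ S x, S y & d = edist x y]].

Definition set_borsuk_feasible (R : realType) (E : finType) (S : set (E -> R)) (k : nat)
  : Prop :=
  exists c : (E -> R) -> 'I_k,
    forall i : 'I_k, ediam [set x | S x /\ c x = i] < ediam S.

Definition set_borsuk (R : realType) (E : finType) (S : set (E -> R)) : option nat :=
  ext_min (set_borsuk_feasible S).

Definition indic (R : realType) (E : finType) (S : {set E}) : E -> R :=
  fun e => if e \in S then 1 else 0.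

Definition matroid_polytope (R : realType) (E : finType) (Bs : {set {set E}})
  : set (E -> R) :=
  [set x | exists lam : {set E} -> R,
     [/\ (forall B, 0 <= lam B),
         \sum_(B in Bs) lam B = 1 &
         x = (fun e => \sum_(B in Bs) lam B * indic R B e)]].

From mathcomp Require Import all_boot all_order all_algebra.
From mathcomp Require Import boolp classical_sets reals.
From mathcomp Require Import lra.
Set Implicit Arguments. Unset Strict Implicit. Unset Printing Implicit Defensive.
Import Order.TTheory GRing.Theory Num.Theory.
Local Open Scope ring_scope.
Local Open Scope classical_set_scope.

(** Write [d] for the diameter of the family of bases, so that the polytope has
    Euclidean diameter [sqrt d], attained at two vertices.  A partition of the
    bases into parts of diameter [< d] restricts to the vertices, and
    conversely it extends to the polytope: label a point [x] by a basis [B]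
    carrying weight at least [1/N] ([N] the number of bases) in some convex
    representation of [x].  The key estimate is
    [|x - y|^2 <= sum_(B,B') lam_B mu_B' |B (triangle) B'|] for 0/1 polytopes
    (coordinatewise, [(x_e - y_e)^2 <= |x_e - y_e|]), so two points labelled by
    bases at distance [<= d - 1] are at distance at most [sqrt (d - 1/N^2)]. *)

Lemma ler_sum_term (R : numDomainType) (I : finType) (A : {pred I}) (F : I -> R) i0 :
  i0 \in A -> (forall i, i \in A -> 0 <= F i) -> F i0 <= \sum_(i in A) F i.
Proof. by move=> Ai0 F_ge0; rewrite (bigD1 i0) //= lerDl sumr_ge0 // => i /andP[/F_ge0]. Qed.

Lemma exists_ge_inv_card (R : realFieldType) (I : finType) (A : {set I}) (F : I -> R) :
  \sum_(i in A) F i = 1 -> exists2 i, i \in A & #|A|%:R^-1 <= F i.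
Proof.
move=> F_sum1; have [A0 | [i0 Ai0]] := set_0Vmem A.
  by move: F_sum1; rewrite A0 big_set0 => /esym/eqP; rewrite oner_eq0.
have [/existsP[i /andP[Ai Fi]] | /existsPn F_small] :=
  boolP [exists i in A, #|A|%:R^-1 <= F i]; first by exists i.
have A_gt0 : 0 < #|A|%:R :> R by rewrite ltr0n; apply/card_gt0P; exists i0.
have : \sum_(i in A) F i < \sum_(i in A) #|A|%:R^-1.
  apply: ltr_sum => [|i Ai]; first by apply/hasP; exists i0; rewrite ?mem_index_enum.
  by move: (F_small i); rewrite Ai /= -ltNge.
by rewrite F_sum1 sumr_const -[_ *+ _]mulr_natr mulVf ?ltxx // gt_eqF.
Qed.

Section SymmetricDifference.
Variable E : finType.

Lemma leq_symdiff_bdiam (F : {set {set E}}) B B' :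
  B \in F -> B' \in F -> (#|symdiff B B'| <= bdiam F)%N.
Proof.
move=> FB FB'; apply: leq_trans (leq_bigmax_cond B FB).
exact: (leq_bigmax_cond (F := fun B' => #|symdiff B B'|) B' FB').
Qed.

Lemma bdiam_lt (F : {set {set E}}) n : (0 < n)%N ->
  (forall B B', B \in F -> B' \in F -> (#|symdiff B B'| < n)%N) -> (bdiam F < n)%N.
Proof.
move=> n_gt0 lt_n; rewrite -(prednK n_gt0) ltnS.
apply/bigmax_leqP => B FB; apply/bigmax_leqP => B' FB'.
by rewrite -ltnS prednK // lt_n.
Qed.

Lemma bdiam_attained (F : {set {set E}}) : (exists B, B \in F) ->
  exists B B', [/\ B \in F, B' \in F & #|symdiff B B'| = bdiam F].
Proof.
move=> [B0 FB0]; have F_gt0 : (0 < #|mem F|)%N by apply/card_gt0P; exists B0.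
have [B FB eB] := eq_bigmax_cond (fun B => \max_(B' in F) #|symdiff B B'|) F_gt0.
have [B' FB' eB'] := eq_bigmax_cond (fun B' => #|symdiff B B'|) F_gt0.
by exists B, B'; rewrite /bdiam eB eB'.
Qed.

End SymmetricDifference.

Section EuclideanDiameter.
Variables (R : realType) (E : finType).

Definition edists (S : set (E -> R)) : set R :=
  [set r | exists x y, [/\ S x, S y & r = edist x y]].

Lemma edist_le_ediam (S : set (E -> R)) x y :
  has_ubound (edists S) -> S x -> S y -> edist x y <= ediam S.
Proof. by move=> S_bdd Sx Sy; apply: ub_le_sup S_bdd _ _; exists x, y. Qed.

Lemma ediam_le (S : set (E -> R)) r :
  0 <= r -> (forall x y, S x -> S y -> edist x y <= r) -> ediam S <= r.
Proof.
move=> r_ge0 S_le; change (sup (edists S) <= r).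
have [S_neq0 | /nonemptyPn ->] := pselect (edists S !=set0); last by rewrite sup0.
by apply: ge_sup S_neq0 _ => _ [x [y [Sx Sy ->]]]; apply: S_le.
Qed.

Lemma normr_indicB (B B' : {set E}) e :
  `|indic R B e - indic R B' e| = (e \in symdiff B B')%:R.
Proof.
rewrite /indic /symdiff !inE; case: (e \in B); case: (e \in B') => /=;
  by rewrite ?subrr ?subr0 ?sub0r ?normrN ?normr0 ?normr1.
Qed.

Lemma sum_normr_indicB (B B' : {set E}) :
  \sum_e `|indic R B e - indic R B' e| = #|symdiff B B'|%:R.
Proof.
under eq_bigr do rewrite normr_indicB.
rewrite -natr_sum -sum1_card; congr _%:R.
by rewrite [RHS]big_mkcond; apply: eq_bigr => e _; case: (e \in _).
Qed.

Lemma edist_indic (B B' : {set E}) :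
  edist (indic R B) (indic R B') = Num.sqrt #|symdiff B B'|%:R.
Proof.
rewrite /edist -sum_normr_indicB; congr Num.sqrt; apply: eq_bigr => e _.
rewrite -[_ ^+ 2]ger0_norm ?sqr_ge0 // normrX normr_indicB.
by case: (_ \in _); rewrite ?expr1n ?expr0n.
Qed.

End EuclideanDiameter.

Section ConvexCombinations.
Variables (R : realType) (E : finType) (Bs : {set {set E}}).

Definition indic_comb (lam : {set E} -> R) : E -> R :=
  fun e => \sum_(B in Bs) lam B * indic R B e.

Lemma indic_comb_ge0 lam e : (forall B, 0 <= lam B) -> 0 <= indic_comb lam e.
Proof. by move=> lam_ge0; apply: sumr_ge0 => B _; rewrite mulr_ge0 // /indic; case: ifP. Qed.

Lemma indic_comb_le1 lam e : (forall B, 0 <= lam B) -> \sum_(B in Bs) lam B = 1 ->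
  indic_comb lam e <= 1.
Proof.
move=> lam_ge0 <-; apply: ler_sum => B _.
by rewrite ler_piMr // /indic; case: ifP.
Qed.

Variables lam mu : {set E} -> R.
Hypotheses (lam_ge0 : forall B, 0 <= lam B) (lam_sum1 : \sum_(B in Bs) lam B = 1).
Hypotheses (mu_ge0 : forall B, 0 <= mu B) (mu_sum1 : \sum_(B in Bs) mu B = 1).

Lemma double_sum_weightl (f : {set E} -> R) :
  \sum_(B in Bs) \sum_(B' in Bs) lam B * mu B' * f B = \sum_(B in Bs) lam B * f B.
Proof. by apply: eq_bigr => B _; rewrite -big_distrl -big_distrr /= mu_sum1 mulr1. Qed.

Lemma double_sum_weightr (f : {set E} -> R) :
  \sum_(B in Bs) \sum_(B' in Bs) lam B * mu B' * f B' = \sum_(B' in Bs) mu B' * f B'.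
Proof.
rewrite exchange_big; apply: eq_bigr => B' _.
by rewrite -big_distrl -big_distrl /= lam_sum1 mul1r.
Qed.

Lemma double_sum_const c : \sum_(B in Bs) \sum_(B' in Bs) lam B * mu B' * c = c.
Proof. by rewrite (double_sum_weightl (fun=> c)) -big_distrl /= lam_sum1 mul1r. Qed.

Lemma indic_combB e : indic_comb lam e - indic_comb mu e =
  \sum_(B in Bs) \sum_(B' in Bs) lam B * mu B' * (indic R B e - indic R B' e).
Proof.
rewrite /indic_comb -(double_sum_weightl (fun B => indic R B e)).
rewrite -(double_sum_weightr (fun B => indic R B e)) -sumrB.
by apply: eq_bigr => B _; rewrite -sumrB; apply: eq_bigr => B' _; rewrite mulrBr.
Qed.

Lemma sum_sqr_indic_combB :
  \sum_e (indic_comb lam e - indic_comb mu e) ^+ 2 <=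
  \sum_(B in Bs) \sum_(B' in Bs) lam B * mu B' * #|symdiff B B'|%:R.
Proof.
have sqr_le_norm e : (indic_comb lam e - indic_comb mu e) ^+ 2 <=
    `|indic_comb lam e - indic_comb mu e|.
  have norm_le1 : `|indic_comb lam e - indic_comb mu e| <= 1.
    have := indic_comb_ge0 e lam_ge0; have := indic_comb_le1 e lam_ge0 lam_sum1.
    have := indic_comb_ge0 e mu_ge0; have := indic_comb_le1 e mu_ge0 mu_sum1.
    by rewrite ler_distl => *; apply/andP; split; lra.
  by rewrite -[_ ^+ 2]ger0_norm ?sqr_ge0 // normrX expr2 ler_piMr.
have norm_le e : `|indic_comb lam e - indic_comb mu e| <=
    \sum_(B in Bs) \sum_(B' in Bs) lam B * mu B' * `|indic R B e - indic R B' e|.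
  rewrite indic_combB; apply: le_trans (ler_norm_sum _ _ _) _; apply: ler_sum => B _.
  apply: le_trans (ler_norm_sum _ _ _) _; apply: ler_sum => B' _.
  by rewrite normrM ger0_norm ?mulr_ge0.
apply: le_trans (ler_sum _ (fun e _ => le_trans (sqr_le_norm e) (norm_le e))) _.
rewrite exchange_big; apply: ler_sum => B _; rewrite exchange_big; apply: ler_sum => B' _.
by rewrite -big_distrr /= sum_normr_indicB.
Qed.

Section Bounded.
Variables (w : {set E} -> {set E} -> R) (c : R).
Hypothesis w_le : forall B B', B \in Bs -> B' \in Bs -> w B B' <= c.

Lemma double_sum_le : \sum_(B in Bs) \sum_(B' in Bs) lam B * mu B' * w B B' <= c.
Proof.
rewrite -[X in _ <= X](double_sum_const c); apply: ler_sum => B BsB.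
by apply: ler_sum => B' BsB'; rewrite ler_wpM2l ?mulr_ge0 ?w_le.
Qed.

Lemma double_sum_le_sub B0 B1 : B0 \in Bs -> B1 \in Bs ->
  \sum_(B in Bs) \sum_(B' in Bs) lam B * mu B' * w B B' <=
  c - lam B0 * mu B1 * (c - w B0 B1).
Proof.
move=> BsB0 BsB1; rewrite lerBrDl -lerBrDr.
have -> : c - \sum_(B in Bs) \sum_(B' in Bs) lam B * mu B' * w B B' =
    \sum_(B in Bs) \sum_(B' in Bs) lam B * mu B' * (c - w B B').
  rewrite -{1}(double_sum_const c) -sumrB; apply: eq_bigr => B _.
  by rewrite -sumrB; apply: eq_bigr => B' _; rewrite mulrBr.
have gap_ge0 B B' : B \in Bs -> B' \in Bs -> 0 <= lam B * mu B' * (c - w B B').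
  by move=> BsB BsB'; rewrite !mulr_ge0 // subr_ge0 w_le.
apply: le_trans (ler_sum_term BsB0 _); last first.
  by move=> B BsB; apply: sumr_ge0 => B' BsB'; apply: gap_ge0.
by apply: (ler_sum_term (F := fun B' => _) BsB1) => B' BsB'; apply: gap_ge0.
Qed.

End Bounded.
End ConvexCombinations.

Section MatroidPolytope.
Variables (R : realType) (E : finType) (Bs : {set {set E}}).
Hypothesis Bs_neq0 : exists B, B \in Bs.

Let d := bdiam Bs.
Let P := @matroid_polytope R E Bs.

Lemma indic_in_polytope B : B \in Bs -> P (indic R B).
Proof.
move=> BsB; exists (fun B' => (B' == B)%:R); split.
- by move=> B'; case: (_ == _).
- by rewrite (bigD1 B) //= eqxx big1 ?addr0 // => B' /andP[_ /negbTE ->].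
- apply: funext => e; rewrite (bigD1 B) //= eqxx mul1r big1 ?addr0 //.
  by move=> B' /andP[_ /negbTE ->]; rewrite mul0r.
Qed.

Lemma polytope_edist_le x y : P x -> P y -> edist x y <= Num.sqrt d%:R.
Proof.
move=> [lam [lam_ge0 lam_sum1 ->]] [mu [mu_ge0 mu_sum1 ->]].
rewrite /edist ler_sqrt //; apply: le_trans (sum_sqr_indic_combB _ _ _ _) _ => //.
by apply: double_sum_le => // B B' BsB BsB'; rewrite ler_nat leq_symdiff_bdiam.
Qed.

Lemma has_ubound_edists (S : set (E -> R)) : S `<=` P -> has_ubound (edists S).
Proof.
by move=> SP; exists (Num.sqrt d%:R) => _ [x [y [Sx Sy ->]]]; apply: polytope_edist_le; apply: SP.
Qed.

Lemma ediam_polytope : ediam P = Num.sqrt d%:R.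
Proof.
apply/eqP; rewrite eq_le ediam_le ?sqrtr_ge0 //=; last exact: polytope_edist_le.
have [B [B' [BsB BsB' dBB']]] := bdiam_attained Bs_neq0.
rewrite /d -dBB' -edist_indic edist_le_ediam //; first exact: has_ubound_edists.
all: exact: indic_in_polytope.
Qed.

Lemma polytope_to_bases_feasible k :
  set_borsuk_feasible P k -> matroid_borsuk_feasible Bs k.
Proof.
move=> [c c_lt]; exists (fun B => c (indic R B)) => i.
have symdiff_lt j B B' : B \in Bs -> B' \in Bs ->
    c (indic R B) = j -> c (indic R B') = j -> (#|symdiff B B'| < d)%N.
  move=> BsB BsB' cB cB'.
  have lt_sqrt : Num.sqrt #|symdiff B B'|%:R < Num.sqrt d%:R :> R.
    rewrite -edist_indic -ediam_polytope; apply: le_lt_trans (c_lt j).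
    apply: edist_le_ediam; first by apply: has_ubound_edists => x [].
    - by split; [apply: indic_in_polytope|].
    - by split; [apply: indic_in_polytope|].
  rewrite -(ltr_nat R); apply: contraTT lt_sqrt; rewrite -!leNgt => le_d.
  by rewrite ler_sqrt ?ler0n.
have [B0 BsB0] := Bs_neq0.
have d_gt0 : (0 < d)%N by apply: leq_ltn_trans (symdiff_lt _ B0 B0 BsB0 BsB0 erefl erefl).
apply: bdiam_lt => // B B'; rewrite !inE => /andP[BsB /eqP cB] /andP[BsB' /eqP cB'].
exact: symdiff_lt cB cB'.
Qed.

Definition heavy_basis (x : E -> R) (B : {set E}) : Prop :=
  B \in Bs /\ exists lam : {set E} -> R,
    [/\ (forall B, 0 <= lam B), \sum_(B in Bs) lam B = 1, x = indic_comb Bs lam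
      & #|Bs|%:R^-1 <= lam B].

Lemma exists_heavy_basis x : P x -> exists B, heavy_basis x B.
Proof.
move=> [lam [lam_ge0 lam_sum1 x_eq]].
have [B BsB heavy] := exists_ge_inv_card lam_sum1.
by exists B; split => //; exists lam.
Qed.

Lemma heavy_basis_edist_le x y B0 B1 : heavy_basis x B0 -> heavy_basis y B1 ->
  (#|symdiff B0 B1| < d)%N -> edist x y <= Num.sqrt (d%:R - #|Bs|%:R^-1 ^+ 2).
Proof.
move=> [BsB0 [lam [lam_ge0 lam_sum1 -> lam_B0]]] [BsB1 [mu [mu_ge0 mu_sum1 -> mu_B1]]].
move=> lt_d; have N_inv_ge0 : 0 <= #|Bs|%:R^-1 :> R by rewrite invr_ge0.
have symdiff_le B B' : B \in Bs -> B' \in Bs -> #|symdiff B B'|%:R <= d%:R :> R.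
  by move=> BsB BsB'; rewrite ler_nat leq_symdiff_bdiam.
have sum_le := le_trans (sum_sqr_indic_combB lam_ge0 lam_sum1 mu_ge0 mu_sum1)
  (double_sum_le_sub lam_ge0 lam_sum1 mu_ge0 mu_sum1 symdiff_le BsB0 BsB1).
have gap : #|Bs|%:R^-1 ^+ 2 <= lam B0 * mu B1 * (d%:R - #|symdiff B0 B1|%:R).
  rewrite expr2 -[X in X <= _]mulr1; apply: ler_pM; rewrite ?mulr_ge0 //.
  - exact: ler_pM.
  - by rewrite lerBrDl natr1 ler_nat.
have sum_le_d : \sum_e (indic_comb Bs lam e - indic_comb Bs mu e) ^+ 2 <=
    d%:R - #|Bs|%:R^-1 ^+ 2 by apply: le_trans sum_le _; rewrite lerD2l lerN2.
rewrite /edist ler_sqrt //; apply: le_trans sum_le_d.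
by apply: sumr_ge0 => e _; apply: sqr_ge0.
Qed.

Lemma bases_to_polytope_feasible k :
  matroid_borsuk_feasible Bs k -> set_borsuk_feasible P k.
Proof.
move=> [c c_lt]; pose heavy x := xget finset.set0 (heavy_basis x).
have heavyP x : P x -> heavy_basis x (heavy x).
  by move=> Px; apply: xgetPex; apply: exists_heavy_basis.
exists (fun x => c (heavy x)) => i.
have d_gt0 : (0 < d)%N := leq_ltn_trans (leq0n _) (c_lt (c finset.set0)).
have N_gt0 : 0 < #|Bs|%:R :> R.
  by rewrite ltr0n; apply/card_gt0P; have [B BsB] := Bs_neq0; exists B.
apply: (@le_lt_trans _ _ (Num.sqrt (d%:R - #|Bs|%:R^-1 ^+ 2))).
  apply: ediam_le; first exact: sqrtr_ge0.
  move=> x y [Px cx] [Py cy].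
  apply: heavy_basis_edist_le (heavyP x Px) (heavyP y Py) _.
  apply: leq_ltn_trans (c_lt i); apply: leq_symdiff_bdiam; rewrite inE.
  - by apply/andP; split; [exact: (heavyP x Px).1 | apply/eqP].
  - by apply/andP; split; [exact: (heavyP y Py).1 | apply/eqP].
rewrite ediam_polytope ltr_sqrt ?ltr0n // ltrBlDr ltrDl.
by rewrite exprn_gt0 // invr_gt0.
Qed.

End MatroidPolytope.

Theorem proposition2p2 (R : realType) (E : finType) (Bs : {set {set E}}) :
  is_matroid_bases Bs ->
  matroid_borsuk Bs = set_borsuk (@matroid_polytope R E Bs).
Proof.
move=> [Bs_neq0 _]; rewrite /matroid_borsuk /set_borsuk; congr ext_min.
apply: funext => k; apply: propext; split.
- exact: bases_to_polytope_feasible.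
- exact: polytope_to_bases_feasible.
Qed.
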